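(* Let $\gamma\in(1,3]$ and $m\in\{1,2\}$. Let $P_*=(V_*,C_* )$ be either $P_8$ with $z\in(0,z_M]$, or $P_6$ with $z\in[z_m,z_M]$. Then the quadratic equation in $c$ $$-G_C(V_*,C_* )c^2+\big(F_C(V_*,C_* )-G_V(V_*,C_* )\big)c+F_V(V_*,C_* )=0$$ has two real roots of opposite signs (in particular, at $P_8$ the discriminant $R^2=(F_C-G_V)^2+4F_VG_C$ is strictly positive). Hence there is exactly one negative root, namely $c_1=\frac{F_C-G_V+R}{2G_C}<0$ with $R=\sqrt{(F_C-G_V)^2+4F_VG_C}$, all evaluated at $(V_*,C_* )$.
   Context: Fix $m\in\{1,2\}$ and $\gamma\in(1,3]$. For $z>0$ put $\lambda=1+m\gamma z$, $a_1=1+\frac{m(\gamma-1)}{2}$, $a_2=\frac{m(\gamma-1)+mz\gamma(\gamma-3)}{2}$, $a_3=\frac{mz\gamma(\gamma-1)}{2}$, $G(V,C;\gamma,z)=C^2[(m+1)V+2mz]-V(1+V)(\lambda+V)$, $F(V,C;\gamma,z)=C\{C^2[1+\frac{mz}{1+V}]-a_1(1+V)^2+a_2(1+V)-a_3\}$; $F_C,F_V,G_C,G_V$ denote partial derivatives in $C$ and $V$. $z_M=(\sqrt\gamma+\sqrt2)^{-2}$, $z_m=\frac{\gamma-1}{(2\gamma-1)(\gamma+1)}$; for $z\in(0,z_M]$, $w(z)=\sqrt{1-2(\gamma+2)z+(\gamma-2)^2z^2}$, $V_6=\frac{-1+(\gamma-2)z-w}{2}$, $C_6=1+V_6$, $V_8=\frac{-1+(\gamma-2)z+w}{2}$,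 $C_8=1+V_8$, $P_6=(V_6,C_6)$, $P_8=(V_8,C_8)$. *)

From Stdlib Require Import Reals Lra.
From Coquelicot Require Import Coquelicot.
Open Scope R_scope.

Section Defs.
Variables (m g z : R).

Definition lam : R := 1 + m * g * z.
Definition a1 : R := 1 + m * (g - 1) / 2.
Definition a2 : R := (m * (g - 1) + m * z * g * (g - 3)) / 2.
Definition a3 : R := m * z * g * (g - 1) / 2.

Definition G (V C : R) : R :=
  C ^ 2 * ((m + 1) * V + 2 * m * z) - V * (1 + V) * (lam + V).
Definition F (V C : R) : R :=
  C * (C ^ 2 * (1 + m * z / (1 + V)) - a1 * (1 + V) ^ 2 + a2 * (1 + V) - a3).

Definition F_C (V C : R) : R := Derive (fun c => F V c) C.
Definition F_V (V C : R) : R := Derive (fun v => F v C) V.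
Definition G_C (V C : R) : R := Derive (fun c => G V c) C.
Definition G_V (V C : R) : R := Derive (fun v => G v C) V.
End Defs.

Definition z_M (g : R) : R := / (sqrt g + sqrt 2) ^ 2.
Definition z_m (g : R) : R := (g - 1) / ((2 * g - 1) * (g + 1)).
Definition w (g z : R) : R := sqrt (1 - 2 * (g + 2) * z + (g - 2) ^ 2 * z ^ 2).
Definition V6 (g z : R) : R := (-1 + (g - 2) * z - w g z) / 2.
Definition C6 (g z : R) : R := 1 + V6 g z.
Definition V8 (g z : R) : R := (-1 + (g - 2) * z + w g z) / 2.
Definition C8 (g z : R) : R := 1 + V8 g z.

Definition quadr (m g z V C c : R) : R :=
  - G_C m g z V C * c ^ 2 + (F_C m g z V C - G_V m g z V C) * c + F_V m g z V C.
Definition discr (m g z V C : R) : R :=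
  (F_C m g z V C - G_V m g z V C) ^ 2 + 4 * F_V m g z V C * G_C m g z V C.
Definition c1_root (m g z V C : R) : R :=
  (F_C m g z V C - G_V m g z V C + sqrt (discr m g z V C)) / (2 * G_C m g z V C).

From Stdlib Require Import Reals Lra Psatz.
From Coquelicot Require Import Coquelicot.
Open Scope R_scope.

(* At both points C = 1 + V, and C is a root of x^2 - (1 + (g - 2) z) x + g z.
   Differentiating gives G_C = 2 C ((m + 1) V + 2 m z) and
   F_V = - C (m z + 2 a1 C - a2) there; comparing C with the roots of that
   monic quadratic shows G_C < 0 and F_V < 0.  The quadratic in c then has a
   positive leading coefficient and a negative constant term, so its roots have
   opposite signs.  The bound z >= z_m is needed only at the smaller root C6,
   to place it above the zero (a2 - m z) / (2 a1) of the factor of F_V. *)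

Lemma G_C_eq m g z V C : G_C m g z V C = 2 * C * ((m + 1) * V + 2 * m * z).
Proof.
  unfold G_C; apply is_derive_unique; unfold G.
  auto_derive; [trivial | ring].
Qed.

Lemma F_V_eq m g z V C : 1 + V <> 0 ->
  F_V m g z V C =
  - C * (C ^ 2 * m * z / (1 + V) ^ 2 + 2 * a1 m g * (1 + V) - a2 m g z).
Proof.
  intro HV; unfold F_V; apply is_derive_unique; unfold F.
  auto_derive; [auto | field; auto].
Qed.

Lemma quadratic_factor (a B f c : R) : a <> 0 -> 0 <= B ^ 2 + 4 * f * a ->
  let s := sqrt (B ^ 2 + 4 * f * a) in
  - a * c ^ 2 + B * c + f =
  - a * (c - (B + s) / (2 * a)) * (c - (B - s) / (2 * a)).
Proof.
  intros Ha HD s.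
  assert (Hs : s ^ 2 = B ^ 2 + 4 * f * a) by (unfold s; rewrite pow2_sqrt; lra).
  field_simplify; [rewrite Hs; field; exact Ha | exact Ha].
Qed.

Lemma quadratic_opposite_roots (a B f : R) : a < 0 -> f < 0 ->
  let D := B ^ 2 + 4 * f * a in
  let c1 := (B + sqrt D) / (2 * a) in
  0 < D /\
  (exists c c', c < 0 < c' /\ - a * c ^ 2 + B * c + f = 0 /\
                 - a * c' ^ 2 + B * c' + f = 0) /\
  c1 < 0 /\ - a * c1 ^ 2 + B * c1 + f = 0 /\
  (forall c, - a * c ^ 2 + B * c + f = 0 -> c < 0 -> c = c1).
Proof.
  intros Ha Hf D c1.
  assert (HD : 0 < D) by (unfold D; nra).
  set (s := sqrt D) in c1.
  set (c2 := (B - s) / (2 * a)).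
  assert (Hfac : forall c, - a * c ^ 2 + B * c + f = - a * (c - c1) * (c - c2))
    by (intro c; exact (quadratic_factor a B f c ltac:(lra) ltac:(unfold D in HD; lra))).
  assert (HBs : B ^ 2 < s ^ 2) by (unfold s; rewrite pow2_sqrt; unfold D; nra).
  assert (Hs0 : 0 <= s) by apply sqrt_pos.
  assert (Hc1 : c1 < 0).
  { unfold c1, Rdiv; apply Rmult_pos_neg; [nra | apply Rinv_neg; lra]. }
  assert (Hc2 : 0 < c2).
  { unfold c2, Rdiv; apply Rmult_neg_neg; [nra | apply Rinv_neg; lra]. }
  split; [exact HD |].
  split; [exists c1, c2; rewrite !Hfac; split; [lra | split; ring] |].
  split; [exact Hc1 |].
  split; [rewrite Hfac; ring |].
  intros c Hc Hneg; rewrite Hfac in Hc.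
  destruct (Rmult_integral _ _ Hc) as [H | H]; [| lra].
  destruct (Rmult_integral _ _ H); lra.
Qed.

Lemma z_M_le g : 1 <= g -> z_M g <= 1 / 5.
Proof.
  intro Hg; unfold z_M.
  assert (Hsg : 1 <= sqrt g) by (rewrite <- sqrt_1; apply sqrt_le_1_alt; lra).
  assert (Hs2 : 1.4 <= sqrt 2).
  { rewrite <- (sqrt_pow2 1.4) by lra; apply sqrt_le_1_alt; lra. }
  unfold Rdiv; rewrite Rmult_1_l.
  apply Rinv_le_contravar; [lra | nra].
Qed.

Lemma radicand_factor g z : 0 <= g ->
  1 - 2 * (g + 2) * z + (g - 2) ^ 2 * z ^ 2 =
  (1 - (sqrt g + sqrt 2) ^ 2 * z) * (1 - (sqrt g - sqrt 2) ^ 2 * z).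
Proof.
  intro Hg.
  assert (Hsg : sqrt g ^ 2 = g) by (apply pow2_sqrt; exact Hg).
  assert (Hs2 : sqrt 2 ^ 2 = 2) by (apply pow2_sqrt; lra).
  transitivity (1 - 2 * (sqrt g ^ 2 + sqrt 2 ^ 2) * z
                + (sqrt g ^ 2 - sqrt 2 ^ 2) ^ 2 * z ^ 2);
    [rewrite Hsg, Hs2; ring | ring].
Qed.

Lemma radicand_nonneg g z : 1 <= g -> 0 <= z <= z_M g ->
  0 <= 1 - 2 * (g + 2) * z + (g - 2) ^ 2 * z ^ 2.
Proof.
  intros Hg [Hz HzM]; rewrite radicand_factor by lra.
  set (s := sqrt g); set (t := sqrt 2).
  assert (Hs : 1 <= s) by (unfold s; rewrite <- sqrt_1; apply sqrt_le_1_alt; lra).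
  assert (Ht : 0 <= t) by apply sqrt_pos.
  assert (Hsz : (s + t) ^ 2 * z <= 1).
  { unfold z_M in HzM; fold s t in HzM.
    replace 1 with ((s + t) ^ 2 * / (s + t) ^ 2) by (field; nra).
    apply Rmult_le_compat_l; nra. }
  assert ((s - t) ^ 2 * z <= (s + t) ^ 2 * z) by (apply Rmult_le_compat_r; nra).
  apply Rmult_le_pos; lra.
Qed.

Lemma w_sqr g z : 1 <= g -> 0 <= z <= z_M g ->
  w g z ^ 2 = 1 - 2 * (g + 2) * z + (g - 2) ^ 2 * z ^ 2.
Proof. intros; apply pow2_sqrt, radicand_nonneg; assumption. Qed.

Lemma C8_root g z : 1 <= g -> 0 <= z <= z_M g ->
  C8 g z ^ 2 - (1 + (g - 2) * z) * C8 g z + g * z = 0 /\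
  1 + (g - 2) * z <= 2 * C8 g z.
Proof.
  intros Hg Hz; pose proof (w_sqr g z Hg Hz) as Hw.
  assert (Hw0 : 0 <= w g z) by apply sqrt_pos.
  unfold C8, V8; split; [nra | lra].
Qed.

Lemma C6_root g z : 1 <= g -> 0 <= z <= z_M g ->
  C6 g z ^ 2 - (1 + (g - 2) * z) * C6 g z + g * z = 0.
Proof. intros Hg Hz; pose proof (w_sqr g z Hg Hz); unfold C6, V6; nra. Qed.

Lemma monic_root_lt (k p C T : R) : C ^ 2 - k * C + p = 0 ->
  k < 2 * T -> 0 < T ^ 2 - k * T + p -> C < T.
Proof.
  intros HC HT Hq; destruct (Rlt_le_dec C T) as [| HTC]; [assumption |].
  assert (0 <= (C - T) * (C + T - k)) by (apply Rmult_le_pos; lra); nra.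
Qed.

Lemma monic_root_gt (k p C T : R) : C ^ 2 - k * C + p = 0 ->
  2 * T < k -> 0 < T ^ 2 - k * T + p -> T < C.
Proof.
  intros HC HT Hq; destruct (Rlt_le_dec T C) as [| HCT]; [assumption |].
  assert (0 <= (T - C) * (k - C - T)) by (apply Rmult_le_pos; lra); nra.
Qed.

(* With e = g - 1 and h = z (2 g - 1) (g + 1) - e >= 0 (that is, z >= z_m),
   16 a1^2 times the left-hand side is a sum of manifestly nonnegative terms. *)
Lemma threshold_outside_roots m g z : m = 1 \/ m = 2 -> 1 < g <= 3 ->
  0 < z <= 1 / 5 -> z_m g <= z ->
  let T := (a2 m g z - m * z) / (2 * a1 m g) in
  0 < T ^ 2 - (1 + (g - 2) * z) * T + g * z.
Proof.
  intros Hm Hg Hz Hzm T.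
  assert (Ha1 : 0 < a1 m g) by (unfold a1; destruct Hm as [-> | ->]; nra).
  assert (Hh : g - 1 <= z * (2 * g - 1) * (g + 1)).
  { unfold z_m in Hzm.
    apply Rmult_le_compat_r with (r := (2 * g - 1) * (g + 1)) in Hzm; [| nra].
    unfold Rdiv in Hzm; rewrite Rmult_assoc, Rinv_l in Hzm; nra. }
  apply Rmult_lt_reg_r with (r := 16 * a1 m g ^ 2); [nra |].
  rewrite Rmult_0_l; unfold T.
  replace ((_ ^ 2 - _ + _) * (16 * a1 m g ^ 2))
    with (4 * (a2 m g z - m * z) ^ 2
          - 8 * (1 + (g - 2) * z) * (a2 m g z - m * z) * a1 m g
          + 16 * g * z * a1 m g ^ 2) by (field; lra).
  unfold a1, a2; clear T Ha1.
  set (e := g - 1) in *.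
  assert (Hge : g = 1 + e) by (unfold e; ring).
  clearbody e; subst g.
  assert (He : 0 < e <= 2) by lra.
  set (h := z * (2 * (1 + e) - 1) * ((1 + e) + 1) - e).
  assert (Hh0 : 0 <= h) by (unfold h; lra).
  assert (Heh : 0 <= e * h) by nra.
  assert (Hez : 0 <= e * z) by nra.
  assert (He2z : 0 <= e ^ 2 * z) by nra.
  destruct Hm as [-> | ->].
  - assert (0 <= e * z * z * (16 - 2 * e ^ 2 - e ^ 3)).
    { apply Rmult_le_pos; [apply Rmult_le_pos; nra | nra]. }
    assert (0 <= e * z * (18 - 4 * z)) by (apply Rmult_le_pos; nra).
    unfold h in *; nra.
  - assert (0 <= 4 * e * z * z * (6 + 3 * e - e ^ 3)).
    { apply Rmult_le_pos; [apply Rmult_le_pos; nra | nra]. }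
    unfold h in *; nra.
Qed.

Section CriticalPoint.

Variables (m g z C : R).
Hypotheses (Hm : m = 1 \/ m = 2) (Hg : 1 < g <= 3) (Hz : 0 < z <= 1 / 5).
Hypothesis HC : C ^ 2 - (1 + (g - 2) * z) * C + g * z = 0.

Lemma critical_C_pos : 0 < C.
Proof.
  assert (Hk : 0 < 1 + (g - 2) * z) by nra.
  destruct (Rlt_le_dec 0 C) as [| HC0]; [assumption |].
  assert (0 <= - C * (1 + (g - 2) * z - C)) by (apply Rmult_le_pos; lra).
  nra.
Qed.

Lemma G_C_factor_neg : (m + 1) * (C - 1) + 2 * m * z < 0.
Proof.
  assert (HT : C < 1 - 2 * m * z / (m + 1)).
  { apply (monic_root_lt (1 + (g - 2) * z) (g * z)); [exact HC | |];
      destruct Hm as [-> | ->]; field_simplify; nra. }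
  apply Rmult_lt_compat_l with (r := m + 1) in HT; [| lra].
  field_simplify in HT; [lra | lra].
Qed.

Lemma F_V_factor_pos : 1 + (g - 2) * z <= 2 * C \/ z_m g <= z ->
  0 < m * z + 2 * a1 m g * C - a2 m g z.
Proof.
  intro Hpos.
  assert (Ha1 : 0 < a1 m g) by (unfold a1; destruct Hm as [-> | ->]; nra).
  set (T := (a2 m g z - m * z) / (2 * a1 m g)).
  assert (HT : 2 * T < 1 + (g - 2) * z).
  { unfold T; apply Rmult_lt_reg_r with (r := a1 m g); [exact Ha1 |].
    field_simplify; [| lra]; unfold a1, a2; destruct Hm as [-> | ->]; nra. }
  assert (HTC : T < C).
  { destruct Hpos as [Hbig | Hzm]; [lra |].
    apply (monic_root_gt (1 + (g - 2) * z) (g * z)); [exact HC | exact HT |].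
    apply threshold_outside_roots; assumption. }
  replace (m * z + 2 * a1 m g * C - a2 m g z) with (2 * a1 m g * (C - T))
    by (unfold T; field; lra).
  apply Rmult_lt_0_compat; lra.
Qed.

Lemma G_C_neg_at_critical : G_C m g z (C - 1) C < 0.
Proof.
  rewrite G_C_eq.
  pose proof critical_C_pos; pose proof G_C_factor_neg; nra.
Qed.

Lemma F_V_neg_at_critical : 1 + (g - 2) * z <= 2 * C \/ z_m g <= z ->
  F_V m g z (C - 1) C < 0.
Proof.
  intro Hpos; pose proof critical_C_pos as HC0.
  rewrite F_V_eq by lra.
  replace (1 + (C - 1)) with C by ring.
  replace (C ^ 2 * m * z / C ^ 2) with (m * z) by (field; lra).
  pose proof (F_V_factor_pos Hpos); nra.
Qed.

End CriticalPoint.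

Theorem mainTheorem3 (m g z Vs Cs : R) :
  (m = 1 \/ m = 2) -> 1 < g <= 3 -> 0 < z ->
  ((0 < z <= z_M g /\ Vs = V8 g z /\ Cs = C8 g z) \/
   (z_m g <= z <= z_M g /\ Vs = V6 g z /\ Cs = C6 g z)) ->
  G_C m g z Vs Cs <> 0 /\
  0 < discr m g z Vs Cs /\
  (exists c c', c < 0 < c' /\ quadr m g z Vs Cs c = 0 /\ quadr m g z Vs Cs c' = 0) /\
  c1_root m g z Vs Cs < 0 /\ quadr m g z Vs Cs (c1_root m g z Vs Cs) = 0 /\
  (forall c, quadr m g z Vs Cs c = 0 -> c < 0 -> c = c1_root m g z Vs Cs).
Proof.
  intros Hm Hg Hz HP.
  assert (HzM : 0 <= z <= z_M g) by (destruct HP as [[[_ H] _] | [[_ H] _]]; lra).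
  assert (Hz5 : 0 < z <= 1 / 5) by (pose proof (z_M_le g); lra).
  assert (Hcrit : Vs = Cs - 1 /\
                  Cs ^ 2 - (1 + (g - 2) * z) * Cs + g * z = 0 /\
                  (1 + (g - 2) * z <= 2 * Cs \/ z_m g <= z)).
  { destruct HP as [[_ [-> ->]] | [[Hzm _] [-> ->]]].
    - destruct (C8_root g z ltac:(lra) HzM).
      unfold C8 at 1; repeat split; [ring | assumption | left; assumption].
    - unfold C6 at 1; repeat split; [ring | apply C6_root; lra | right; assumption]. }
  destruct Hcrit as [-> [HC Hpos]].
  pose proof (G_C_neg_at_critical m g z Cs Hm Hg Hz5 HC) as HGC.
  pose proof (F_V_neg_at_critical m g z Cs Hm Hg Hz5 HC Hpos) as HFV.
  split; [lra |].
  exact (quadratic_opposite_roots _ (F_C m g z (Cs - 1) Cs - G_V m g z (Cs - 1) Cs)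
           _ HGC HFV).
Qed.
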